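(* Let $(\mathcal Q,d)$ be a Hadamard space, $Y$ a $\mathcal Q$-valued random variable and $o\in\mathcal Q$. Let $m\in\arg\min_{q\in\mathcal Q}\mathbb E[d(Y,q)-d(Y,o)]$ (a Fréchet median), let $q\in\mathcal Q\setminus\{m\}$ and let $\eta\in[0,1]$. Then $$\mathbb E\big[d(Y,q)-d(Y,m)\big]\ \ge\ \tfrac12\,\eta^2\, d(q,m)^2\,\mathbb E\Big[\max\big(d(Y,m),d(Y,q)\big)^{-1}\,\mathbf 1_{A(m,q,\eta)}(Y)\Big].$$
   Context: A Hadamard space is a complete metric space $(\mathcal Q,d)$ such that for all $y_0,y_1\in\mathcal Q$ there is $m\in\mathcal Q$ with $\frac12 d(y_0,q)^2+\frac12 d(y_1,q)^2-\frac14 d(y_0,y_1)^2\ge d(q,m)^2$ for all $q\in\mathcal Q$ (complete CAT(0) space). For $p\ne q$ in a Hadamard space, $\gamma_{p\to q}:[0,d(p,q)]\to\mathcal Q$ denotes the unique unit-speed geodesic from $p$ to $q$ (i.e. $d(\gamma(s),\gamma(t))=|s-t|$). For a real function $g$, $g^{\oplus}$, $g^{\ominus}$ denote right and left derivatives. For $y\in\mathcal Q$ write $f_y(t):=d(y,\gamma_{p\to q}(t))$. The ''bowtie complement'' is $$A(p,q,\eta):=\Big\{y\in\mathcal Q:\ \max\big(f_y^{\oplus}(0)^2,\ f_y^{\ominus}(d(q,p))^2\big)\le 1-\eta^2\Big\}.$$ *)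

From HB Require Import structures.
From mathcomp Require Import all_boot all_order all_algebra.
From mathcomp Require Import all_classical all_reals all_analysis.
Set Implicit Arguments. Unset Strict Implicit. Unset Printing Implicit Defensive.
Import Order.TTheory GRing.Theory Num.Theory.
Import numFieldNormedType.Exports.
Local Open Scope classical_set_scope.
Local Open Scope ring_scope.

Section Hadamard.
Variables (R : realType) (Q : Type) (d : Q -> Q -> R).

Definition is_metric : Prop :=
  (forall x y, 0 <= d x y) /\ (forall x y, d x y = 0 <-> x = y) /\
  (forall x y, d x y = d y x) /\ (forall x y z, d x z <= d x y + d y z).

Definition d_cauchy (u : nat -> Q) : Prop :=
  forall e : R, 0 < e -> exists N : nat, forall m n : nat,
    (N <= m)%N -> (N <= n)%N -> d (u m) (u n) < e.

Definition d_converges (u : nat -> Q) (x : Q) : Prop :=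
  forall e : R, 0 < e -> exists N : nat, forall n : nat, (N <= n)%N -> d (u n) x < e.

Definition d_complete : Prop :=
  forall u : nat -> Q, d_cauchy u -> exists x, d_converges u x.

Definition hadamard : Prop :=
  is_metric /\ d_complete /\
  forall y0 y1 : Q, exists m : Q, forall q : Q,
    (1/2) * d y0 q ^+ 2 + (1/2) * d y1 q ^+ 2 - (1/4) * d y0 y1 ^+ 2 >= d q m ^+ 2.

Definition d_open (U : set Q) : Prop :=
  forall x, U x -> exists e : R, 0 < e /\ forall y, d x y < e -> U y.

(* g is a unit-speed geodesic from p to q, parametrised on [0, d p q]
   (values of g outside [0, d p q] are irrelevant) *)
Definition unit_geodesic (p q : Q) (g : R -> Q) : Prop :=
  g 0 = p /\ g (d p q) = q /\
  forall s t : R, 0 <= s <= d p q -> 0 <= t <= d p q -> d (g s) (g t) = `|s - t|.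

Definition right_deriv (f : R -> R) (t a : R) : Prop :=
  (fun h : R => (f (t + h) - f t) / h) @ (0 : R)^'+ --> a.

Definition left_deriv (f : R -> R) (t a : R) : Prop :=
  (fun h : R => (f t - f (t - h)) / h) @ (0 : R)^'+ --> a.

(* bowtie complement A(p,q,eta), using the (unique) unit-speed geodesic
   gamma_{p -> q}; f_y(t) = d(y, gamma(t)) *)
Definition bowtie_compl (p q : Q) (eta : R) : set Q :=
  [set y | forall g : R -> Q, unit_geodesic p q g ->
     exists a b : R,
       right_deriv (fun t => d y (g t)) 0 a /\
       left_deriv (fun t => d y (g t)) (d q p) b /\
       Num.max (a ^+ 2) (b ^+ 2) <= 1 - eta ^+ 2].

End Hadamard.

From HB Require Import structures.
From mathcomp Require Import all_boot all_order all_algebra.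
From mathcomp Require Import all_classical all_reals all_analysis.
From mathcomp Require Import lra zify ring measurable_realfun.
Import Order.TTheory GRing.Theory Num.Theory.
Import numFieldNormedType.Exports.
Set Implicit Arguments. Unset Strict Implicit. Unset Printing Implicit Defensive.
Local Open Scope classical_set_scope.
Local Open Scope ring_scope.

(* Let g be the unit-speed geodesic from m to q (the iterated midpoints
   between m and q converge by completeness), L = d(m,q) and t_n = L / 2^n.
   For fixed y, convexity of d(y,-) at the midpoint g(t_(n+1)) of [m, g(t_n)]
   makes the chord slopes (d(y, g t_n) - d(y,m)) / t_n nonincreasing, with
   limit the right derivative a of d(y, g -) at 0; the CAT(0) inequality at
   the same midpoints gives 2 a d(y,m) L <= d(y,q)^2 - d(y,m)^2 - L^2.  With
   a^2 <= 1 - eta^2 on the bowtie complement, this bounds d(y,q) - d(y,m) - L a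
   from below by eta^2 L^2 / (2 max(d(y,m), d(y,q))).  That quantity is the
   increasing limit of gap_n(y) = d(y,q) - d(y,m) - (L / t_n) (d(y, g t_n) - d(y,m)),
   whose expectation at y = Y is at most E[d(Y,q) - d(Y,m)] because m is a
   median; monotone convergence concludes. *)

Lemma le_of_sqr_le (R : realDomainType) (a b : R) :
  0 <= b -> a ^+ 2 <= b ^+ 2 -> a <= b.
Proof. by move=> b0 h; case: (lerP a b) => // ab; nra. Qed.

(* [(Dq - Dm - L a) (Dq + Dm + L a) = Dq^2 - (Dm + L a)^2 >= L^2 (1 - a^2)],
   and the second factor is at most [2 (Num.max Dm Dq)]. *)
Lemma bowtie_gain (R : realFieldType) (Dm Dq L a e : R) :
  0 <= Dm -> 0 <= Dq -> 0 < L -> L <= Dm + Dq -> a * L <= Dq - Dm ->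
  2 * a * Dm * L <= Dq ^+ 2 - Dm ^+ 2 - L ^+ 2 -> a ^+ 2 <= 1 - e ^+ 2 ->
  2^-1 * e ^+ 2 * L ^+ 2 / Num.max Dm Dq <= Dq - Dm - L * a.
Proof.
move=> Dm0 Dq0 L0 tri slope_le cat_le a_le.
have M_gt0 : 0 < Num.max Dm Dq by rewrite lt_max; case: (ltP 0 Dm) => //= ?; lra.
have := le_max Dm Dm Dq; have := le_max Dq Dm Dq; rewrite !lexx orbT /= => Dq_le Dm_le.
set M := Num.max Dm Dq in M_gt0 Dm_le Dq_le *; set u := Dq - Dm - L * a.
have u_ge0 : 0 <= u by rewrite /u; nra.
have factor_le : u * (Dq + Dm + L * a) <= u * (2 * M) by rewrite ler_wpM2l //; nra.
have : L ^+ 2 * e ^+ 2 <= L ^+ 2 * (1 - a ^+ 2) by rewrite ler_pM2l ?exprn_gt0 //; lra.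
have : L ^+ 2 * (1 - a ^+ 2) <= u * (Dq + Dm + L * a) by rewrite /u; nra.
by rewrite ler_pdivrMr //; nra.
Qed.

Section hadamard_geometry.
Variables (R : realType) (Q : Type) (d : Q -> Q -> R).
Hypothesis hd : hadamard d.

Let dist_ge0 x y : 0 <= d x y := hd.1.1 x y.
Let dist_xx x : d x x = 0. Proof. exact/(hd.1.2.1 x x). Qed.
Let dist_eq0 x y : d x y = 0 -> x = y. Proof. by move/(hd.1.2.1 x y). Qed.
Let distC x y : d x y = d y x := hd.1.2.2.1 x y.
Let dist_triangle x y z : d x z <= d x y + d y z := hd.1.2.2.2 x y z.

Lemma d_converges_cst (u : nat -> Q) c x :
  (forall n, u n = c) -> d_converges d u x -> x = c.
Proof.
move=> uc ux; apply: dist_eq0; apply/eqP; rewrite eq_le dist_ge0 andbT.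
apply/ler_addgt0Pr => e e0; rewrite add0r.
by have [N /(_ N (leqnn N))] := ux e e0; rewrite uc distC => /ltW.
Qed.

Definition midpoint x z : Q := proj1_sig (cid (hd.2.2 x z)).

Lemma midpointP x z y : d y (midpoint x z) ^+ 2 <=
  1/2 * d x y ^+ 2 + 1/2 * d z y ^+ 2 - 1/4 * d x z ^+ 2.
Proof. exact: (proj2_sig (cid (hd.2.2 x z)) y). Qed.

Lemma dist_midpoint x z :
  d x (midpoint x z) = d x z / 2 /\ d (midpoint x z) z = d x z / 2.
Proof.
have hx := midpointP x z x; have hz := midpointP x z z.
rewrite dist_xx (distC z x) dist_xx in hx hz.
have le_x : d x (midpoint x z) <= d x z / 2.
  by apply: le_of_sqr_le; rewrite ?divr_ge0 //; move: hx; rewrite !expr2; nra.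
have le_z : d z (midpoint x z) <= d x z / 2.
  by apply: le_of_sqr_le; rewrite ?divr_ge0 //; move: hz; rewrite !expr2; nra.
have := dist_triangle x (midpoint x z) z.
by rewrite (distC (midpoint x z) z); split; lra.
Qed.

(* Metric midpoints are unique: by [midpointP] with [y := c], any one of them
   is at distance 0 from [midpoint x z]. *)
Lemma cat0_midpoint x z c y : d x c = d x z / 2 -> d c z = d x z / 2 ->
  d y c ^+ 2 <= 1/2 * d x y ^+ 2 + 1/2 * d z y ^+ 2 - 1/4 * d x z ^+ 2.
Proof.
move=> xc cz; have := midpointP x z c; rewrite xc (distC z c) cz => hc.
have /dist_eq0 -> : d c (midpoint x z) = 0.
  apply/eqP; rewrite eq_le dist_ge0 andbT; apply: le_of_sqr_le => //.
  by move: hc; rewrite !expr2 mul0r; nra.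
exact: midpointP.
Qed.

Lemma convex_midpoint x z c y : d x c = d x z / 2 -> d c z = d x z / 2 ->
  d y c <= (d x y + d z y) / 2.
Proof.
move=> xc cz; have := cat0_midpoint y xc cz; rewrite !expr2 => hc.
have := dist_triangle x z y; have := dist_triangle z x y; rewrite (distC z x).
have := dist_ge0 x y; have := dist_ge0 z y => ? ? ? ?.
have diff_le : (d x y - d z y) * (d x y - d z y) <= d x z * d x z.
  have : 0 <= (d x z - (d x y - d z y)) * (d x z + (d x y - d z y)).
    by apply: mulr_ge0; lra.
  nra.
by apply: le_of_sqr_le; [rewrite divr_ge0 ?addr_ge0 | rewrite !expr2; nra].
Qed.

Section dyadic_points.
Variables a b : Q.
Local Notation L := (d a b).
Local Notation step n := (L / 2 ^+ n).

(* [dyadic n k] is the point at parameter [k / 2 ^ n] of the geodesic from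
   [a] to [b], built by iterated midpoints. *)
Fixpoint dyadic n k : Q :=
  if n is n'.+1 then
    if odd k then midpoint (dyadic n' k./2) (dyadic n' k./2.+1)
    else dyadic n' k./2
  else if k == 0%N then a else b.

Lemma dyadic0 n : dyadic n 0 = a.
Proof. by elim: n. Qed.

Lemma dyadic_double n k : dyadic n.+1 k.*2 = dyadic n k.
Proof. by rewrite /= odd_double doubleK. Qed.

Lemma dyadic_scale n p k : dyadic (n + p) (2 ^ p * k)%N = dyadic n k.
Proof.
elim: p => [|p IH]; first by rewrite addn0 expn0 mul1n.
by rewrite addnS expnS -mulnA mul2n dyadic_double.
Qed.

Lemma dyadic_top n : dyadic n (2 ^ n)%N = b.
Proof. by have := dyadic_scale 0 n 1; rewrite add0n muln1 => ->. Qed.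

Lemma dist_dyadicS n k : (k < 2 ^ n)%N -> d (dyadic n k) (dyadic n k.+1) = step n.
Proof.
elim: n k => [|n IH] k.
  by rewrite expn0 ltnS leqn0 => /eqP -> /=; rewrite expr0 divr1.
move=> hk; have hk2 : (k./2 < 2 ^ n)%N.
  by move: hk; rewrite expnS -(odd_double_half k); lia.
have halve : step n / 2 = step n.+1 by rewrite exprS invfM mulrA mulrAC.
have [mid_l mid_r] := dist_midpoint (dyadic n k./2) (dyadic n k./2.+1).
rewrite -halve /= uphalf_half.
by case: (odd k) => /=; rewrite ?add1n ?add0n ?mid_l ?mid_r IH.
Qed.

Lemma dist_dyadic_addn_le n j i : (j + i <= 2 ^ n)%N ->
  d (dyadic n j) (dyadic n (j + i)%N) <= i%:R * step n.
Proof.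
elim: i => [|i IH] h; first by rewrite addn0 dist_xx mul0r.
rewrite addnS; apply: le_trans (dist_triangle _ (dyadic n (j + i)) _) _.
rewrite dist_dyadicS ?(leq_trans _ h) ?addnS //.
rewrite -[i.+1]addn1 natrD mulrDl mul1r lerD2r.
by apply: IH; apply: leq_trans h; rewrite addnS.
Qed.

(* The reverse inequality holds because the dyadic chain from [a] to [b]
   has total length [L]. *)
Lemma dist_dyadic_addn n j i : (j + i <= 2 ^ n)%N ->
  d (dyadic n j) (dyadic n (j + i)%N) = i%:R * step n.
Proof.
move=> h; apply/eqP; rewrite eq_le dist_dyadic_addn_le //=.
have hj : (j <= 2 ^ n)%N by apply: leq_trans h; rewrite leq_addr.
have := @dist_dyadic_addn_le n 0 j; rewrite add0n dyadic0 => /(_ hj) h1.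
have := @dist_dyadic_addn_le n (j + i) (2 ^ n - (j + i)).
rewrite subnKC // dyadic_top => /(_ (leqnn _)).
have total : (2 ^ n)%:R * step n = L.
  by rewrite natrX mulrC -mulrA mulVf ?mulr1 // expf_neq0.
rewrite natrB // natrD mulrBl mulrDl total => h2.
have := dist_triangle a (dyadic n j) b.
have := dist_triangle (dyadic n j) (dyadic n (j + i)%N) b.
lra.
Qed.

Lemma dist_dyadic n j k : (j <= 2 ^ n)%N -> (k <= 2 ^ n)%N ->
  d (dyadic n j) (dyadic n k) = `|j%:R - k%:R| * step n.
Proof.
move=> hj hk; case: (leqP j k) => jk.
  rewrite -(subnKC jk) dist_dyadic_addn; last by rewrite subnKC.
  by rewrite natrD opprD addrA subrr sub0r normrN ger0_norm.
rewrite distC -(subnKC (ltnW jk)) dist_dyadic_addn; last by rewrite subnKC // ltnW.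
by rewrite natrD addrAC subrr add0r ger0_norm.
Qed.

Hypothesis hab : a <> b.

Let L_gt0 : 0 < L.
Proof. by rewrite lt_def dist_ge0 andbT; apply/eqP => /dist_eq0. Qed.

Let step_gt0 n : 0 < step n.
Proof. by rewrite divr_gt0 // exprn_gt0. Qed.

Lemma step_le n p : (n <= p)%N -> step p <= step n.
Proof.
move=> /subnKC <-; rewrite exprD invfM mulrA ler_piMr ?(ltW (step_gt0 n)) //.
by rewrite invf_le1 ?exprn_gt0 // exprn_ege1 // ler1n.
Qed.

Lemma step_lt e : 0 < e -> exists N, step N < e.
Proof.
move=> e_gt0; exists (Num.truncn (L / e)); set N := Num.truncn _.
have : L / e < N.+1%:R by apply: truncnS_gt.
have : N.+1%:R <= 2 ^+ N :> R by rewrite -natrX ler_nat ltn_expl.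
move=> ? ?; rewrite ltr_pdivrMr ?exprn_gt0 // mulrC -ltr_pdivrMr //; lra.
Qed.

Definition dyadic_floor n (t : R) : nat := Num.truncn (t * 2 ^+ n / L).
Definition floor_time n t : R := (dyadic_floor n t)%:R * step n.
Definition approx_point n t : Q := dyadic n (dyadic_floor n t).

Lemma floor_time_itv n t : 0 <= t -> floor_time n t <= t < floor_time n t + step n.
Proof.
move=> t0; have x0 : 0 <= t * 2 ^+ n / L.
  by rewrite mulr_ge0 // ?invr_ge0 ?mulr_ge0 ?exprn_ge0 // ltW.
have /andP[lo hi] := truncn_itv x0.
have e : t * 2 ^+ n / L * step n = t.
  by field; rewrite expf_neq0 ?lt0r_neq0.
have -> : floor_time n t + step n = (dyadic_floor n t).+1%:R * step n.
  by rewrite /floor_time -[(dyadic_floor n t).+1]addn1 natrD mulrDl mul1r.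
by rewrite /floor_time -[X in _ <= X < _]e ler_pM2r // ltr_pM2r // lo hi.
Qed.

Lemma dyadic_floor_le n t : 0 <= t <= L -> (dyadic_floor n t <= 2 ^ n)%N.
Proof.
move=> /andP[t0 tL]; rewrite /dyadic_floor truncn_le_nat.
apply: (@le_lt_trans _ _ (2 ^+ n)); last by rewrite -natrX ltr_nat.
by rewrite ler_pdivrMr // mulrC ler_pM2l // exprn_gt0.
Qed.

Lemma dist_approx_point n s t : 0 <= s <= L -> 0 <= t <= L ->
  d (approx_point n s) (approx_point n t) = `|floor_time n s - floor_time n t|.
Proof.
move=> hs ht; rewrite /approx_point dist_dyadic ?dyadic_floor_le //.
by rewrite /floor_time -mulrBl normrM (gtr0_norm (step_gt0 n)).
Qed.

Lemma dist_approx_point_le n p t : 0 <= t <= L -> (n <= p)%N ->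
  d (approx_point n t) (approx_point p t) <= step n.
Proof.
move=> ht /subnKC <-; set r := (p - n)%N.
have hscale : (2 ^ r * dyadic_floor n t)%N%:R * step (n + r) = floor_time n t.
  by rewrite /floor_time natrM natrX exprD; field; rewrite !expf_neq0.
rewrite {1}/approx_point -(dyadic_scale n r) dist_dyadic ?dyadic_floor_le //;
  last by rewrite expnD mulnC leq_mul2r dyadic_floor_le ?orbT.
rewrite -(gtr0_norm (step_gt0 (n + r))) -normrM mulrBl hscale -/(floor_time _ t).
case/andP: ht => t0 _; have := step_le (leq_addr r n).
have := floor_time_itv n t0; have := floor_time_itv (n + r) t0.
by move=> /andP[? ?] /andP[? ?] ?; rewrite ler_norml; apply/andP; split; lra.
Qed.

Lemma approx_point_cauchy t : 0 <= t <= L -> d_cauchy d (approx_point ^~ t).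
Proof.
move=> ht e e_gt0; have [N hN] := step_lt (divr_gt0 e_gt0 (ltr0Sn _ 1)).
exists N => i j hi hj; have := dist_triangle (approx_point i t) (approx_point N t)
  (approx_point j t).
rewrite (distC (approx_point i t) (approx_point N t)).
have := dist_approx_point_le ht hi; have := dist_approx_point_le ht hj; lra.
Qed.

Definition geodesic (t : R) : Q :=
  if pselect (exists x, d_converges d (approx_point ^~ t) x) is left h
  then proj1_sig (cid h) else a.

Lemma geodesic_cvg t : 0 <= t <= L -> d_converges d (approx_point ^~ t) (geodesic t).
Proof.
move=> ht; rewrite /geodesic; case: pselect => [h|]; first exact: proj2_sig (cid h).
by case; apply: hd.2.1; apply: approx_point_cauchy.
Qed.

Lemma geodesic0 : geodesic 0 = a.
Proof.
apply: d_converges_cst (geodesic_cvg _); last by rewrite lexx ltW.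
by move=> n; rewrite /approx_point /dyadic_floor !mul0r truncn0 dyadic0.
Qed.

Lemma geodesicL : geodesic L = b.
Proof.
apply: d_converges_cst (geodesic_cvg _); last by rewrite lexx ltW.
move=> n; rewrite /approx_point /dyadic_floor mulrC mulrA mulVf ?lt0r_neq0 //.
by rewrite mul1r -natrX natrK dyadic_top.
Qed.

Lemma dist_floor_time n s t : 0 <= s -> 0 <= t ->
  `| `|floor_time n s - floor_time n t| - `|s - t| | <= step n.
Proof.
move=> s0 t0; apply: le_trans (ler_dist_dist _ _) _.
have := floor_time_itv n s0; have := floor_time_itv n t0.
by move=> /andP[? ?] /andP[? ?]; rewrite ler_norml; apply/andP; split; lra.
Qed.

Lemma geodesic_dist s t : 0 <= s <= L -> 0 <= t <= L ->
  d (geodesic s) (geodesic t) = `|s - t|.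
Proof.
move=> hs ht; apply/eqP; rewrite -subr_eq0 -normr_eq0 eq_le normr_ge0 andbT.
apply/ler_addgt0Pr => e e_gt0; rewrite add0r.
have e4 : 0 < e / 4 by rewrite divr_gt0.
have [Ns hNs] := geodesic_cvg hs e4; have [Nt hNt] := geodesic_cvg ht e4.
have [Ne hNe] := step_lt e4.
set n := maxn (maxn Ns Nt) Ne.
have := hNs n (leq_trans (leq_maxl _ _) (leq_maxl _ _)).
have := hNt n (leq_trans (leq_maxr _ _) (leq_maxl _ _)).
have := step_le (leq_maxr (maxn Ns Nt) Ne).
have := dist_floor_time n (proj1 (andP hs)) (proj1 (andP ht)).
rewrite -dist_approx_point // ler_norml => /andP[? ?] ? ? ?.
have := dist_triangle (geodesic s) (approx_point n s) (geodesic t).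
have := dist_triangle (approx_point n s) (approx_point n t) (geodesic t).
have := dist_triangle (approx_point n s) (geodesic s) (approx_point n t).
have := dist_triangle (geodesic s) (geodesic t) (approx_point n t).
rewrite (distC (geodesic s) (approx_point n s)) (distC (geodesic t) (approx_point n t)).
by rewrite ler_norml; move=> ? ? ? ?; apply/andP; split; lra.
Qed.

Lemma unit_geodesic_geodesic : unit_geodesic d a b geodesic.
Proof. by split; [exact: geodesic0 | split; [exact: geodesicL | exact: geodesic_dist]]. Qed.

End dyadic_points.

Lemma hadamard_unit_geodesic a b : exists g, unit_geodesic d a b g.
Proof.
have [<-|hab] := pselect (a = b); last first.
  by exists (geodesic a b); apply: unit_geodesic_geodesic.
exists (fun=> a); do 2!split => //; rewrite dist_xx => s t.
by rewrite -!eq_le => /eqP <- /eqP <-; rewrite subrr normr0.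
Qed.

Section chord_slopes.
Variables (m q : Q) (g : R -> Q).
Hypotheses (hmq : m <> q) (hg : unit_geodesic d m q g).
Local Notation L := (d m q).

Let L_gt0 : 0 < L.
Proof. by rewrite lt_def dist_ge0 andbT; apply/eqP => /dist_eq0. Qed.

Definition dyadic_time n : R := L / 2 ^+ n.

Lemma dyadic_time_gt0 n : 0 < dyadic_time n.
Proof. by rewrite divr_gt0 // exprn_gt0. Qed.

Lemma dyadic_time_itv n : 0 <= dyadic_time n <= L.
Proof.
rewrite ltW ?dyadic_time_gt0 // ler_pdivrMr ?exprn_gt0 // ler_peMr ?(ltW L_gt0) //.
by rewrite exprn_ege1 // ler1n.
Qed.

Lemma dyadic_time0 : dyadic_time 0 = L.
Proof. by rewrite /dyadic_time expr0 divr1. Qed.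

Lemma dyadic_timeS n : dyadic_time n.+1 = dyadic_time n / 2.
Proof. by rewrite /dyadic_time exprS invfM mulrA mulrAC. Qed.

Lemma dyadic_time_cvg : dyadic_time n @[n --> \oo] --> 0.
Proof.
have -> : dyadic_time = geometric L 2^-1.
  by apply: funext => n; rewrite /dyadic_time /geometric /= exprVn.
by apply: cvg_geometric; rewrite ger0_norm // invf_lt1 // ltr1n.
Qed.

Lemma dist_geodesic_time n : d m (g (dyadic_time n)) = dyadic_time n.
Proof.
have [g0 [_ gdist]] := hg.
rewrite -{1}g0 gdist ?dyadic_time_itv ?lexx ?ltW //.
by rewrite sub0r normrN gtr0_norm ?dyadic_time_gt0.
Qed.

Lemma geodesic_time_midpoint n :
  d m (g (dyadic_time n.+1)) = d m (g (dyadic_time n)) / 2 /\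
  d (g (dyadic_time n.+1)) (g (dyadic_time n)) = d m (g (dyadic_time n)) / 2.
Proof.
rewrite !dist_geodesic_time dyadic_timeS; split => //.
have := dyadic_time_gt0 n; have := dyadic_time_itv n.
rewrite hg.2.2 -?dyadic_timeS ?dyadic_time_itv // dyadic_timeS => _ ?.
by rewrite ler0_norm; lra.
Qed.

Variable y : Q.

Definition slope n := (d y (g (dyadic_time n)) - d y m) / dyadic_time n.

Definition cat_slope n :=
  (d y (g (dyadic_time n)) ^+ 2 - d y m ^+ 2 - dyadic_time n ^+ 2) / dyadic_time n.

Lemma slope_nonincr : nonincreasing_seq slope.
Proof.
apply/nonincreasing_seqP => n; have [mid_l mid_r] := geodesic_time_midpoint n.
have := convex_midpoint y mid_l mid_r; rewrite !(distC _ y) => convex.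
have t_gt0 := dyadic_time_gt0 n.
have -> : slope n.+1 =
    2 * (d y (g (dyadic_time n.+1)) - d y m) / dyadic_time n.
  by rewrite /slope dyadic_timeS; field; rewrite lt0r_neq0.
by rewrite /slope ler_pM2r ?invr_gt0 //; lra.
Qed.

Lemma cat_slope_nonincr : nonincreasing_seq cat_slope.
Proof.
apply/nonincreasing_seqP => n; have [mid_l mid_r] := geodesic_time_midpoint n.
have := cat0_midpoint y mid_l mid_r; rewrite !(distC _ y) !dist_geodesic_time.
move=> cat0; have t_gt0 := dyadic_time_gt0 n.
have -> : cat_slope n.+1 = 2 * (d y (g (dyadic_time n.+1)) ^+ 2 - d y m ^+ 2
    - dyadic_time n ^+ 2 / 4) / dyadic_time n.
  by rewrite /cat_slope dyadic_timeS; field; rewrite lt0r_neq0.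
by rewrite /cat_slope ler_pM2r ?invr_gt0 //; lra.
Qed.

Lemma slope_cvg a : right_deriv (fun t => d y (g t)) 0 a -> slope n @[n --> \oo] --> a.
Proof.
move=> /cvg_at_rightP/(_ dyadic_time (conj dyadic_time_gt0 dyadic_time_cvg)).
by under eq_fun => n do rewrite add0r hg.1.
Qed.

Lemma cat_slope_cvg a : right_deriv (fun t => d y (g t)) 0 a ->
  cat_slope n @[n --> \oo] --> 2 * a * d y m.
Proof.
move=> /slope_cvg slope_a.
have -> : cat_slope = fun n => slope n * (2 * d y m + dyadic_time n * slope n)
    - dyadic_time n.
  apply: funext => n; rewrite /cat_slope /slope.
  by field; rewrite lt0r_neq0 ?dyadic_time_gt0.
suff : (fun n => slope n * (2 * d y m + dyadic_time n * slope n) - dyadic_time n)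
    @ \oo --> a * (2 * d y m + 0 * a) - 0.
  by rewrite mul0r addr0 subr0 mulrCA mulrA.
apply: cvgB; last exact: dyadic_time_cvg.
by apply: cvgM => //; apply: cvgD; [exact: cvg_cst | exact: cvgM dyadic_time_cvg _].
Qed.

Lemma slope0 : slope 0 = (d y q - d y m) / L.
Proof. by rewrite /slope dyadic_time0 hg.2.1. Qed.

Lemma cat_slope0 : cat_slope 0 = (d y q ^+ 2 - d y m ^+ 2 - L ^+ 2) / L.
Proof. by rewrite /cat_slope dyadic_time0 hg.2.1. Qed.

Lemma right_deriv_slope_le a : right_deriv (fun t => d y (g t)) 0 a ->
  a * L <= d y q - d y m.
Proof.
move=> /slope_cvg slope_a; rewrite -ler_pdivlMr // -slope0 -(cvg_lim _ slope_a) //.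
exact: nonincreasing_cvgn_ge slope_nonincr (cvgP _ slope_a) 0.
Qed.

Lemma right_deriv_cat_slope_le a : right_deriv (fun t => d y (g t)) 0 a ->
  2 * a * d y m * L <= d y q ^+ 2 - d y m ^+ 2 - L ^+ 2.
Proof.
move=> /cat_slope_cvg cat_a; rewrite -ler_pdivlMr // -cat_slope0 -(cvg_lim _ cat_a) //.
exact: nonincreasing_cvgn_ge cat_slope_nonincr (cvgP _ cat_a) 0.
Qed.

Definition gap n := d y q - d y m - L * slope n.

Lemma gapE n : gap n =
  d y q - d y m - L / dyadic_time n * (d y (g (dyadic_time n)) - d y m).
Proof. by rewrite /gap /slope mulrA mulrAC. Qed.

Lemma gap_ge0 n : 0 <= gap n.
Proof.
rewrite /gap subr_ge0 -ler_pdivlMl // mulrC -slope0.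
exact: slope_nonincr (leq0n n).
Qed.

Lemma gap_nondecr : nondecreasing_seq gap.
Proof.
move=> i j ij; rewrite /gap lerD2l lerN2 ler_pM2l //.
exact: slope_nonincr.
Qed.

Lemma bowtie_le_limn_gap eta :
  ((2^-1 * eta ^+ 2 * d q m ^+ 2 *
    ((Num.max (d y m) (d y q))^-1 * \1_(bowtie_compl d m q eta) y))%:E <=
   limn (fun n => (gap n)%:E))%E.
Proof.
rewrite indicE; case: (boolP (y \in _)) => [|_]; last first.
  rewrite !mulr0; apply: lime_ge; last by apply: nearW => n; rewrite lee_fin gap_ge0.
  by apply: ereal_nondecreasing_is_cvgn => i j ij; rewrite lee_fin gap_nondecr.
rewrite inE => /(_ g hg) [a [b [ha [_ ab_le]]]].
have gap_a : (gap n)%:E @[n --> \oo] --> (d y q - d y m - L * a)%:E.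
  apply: cvg_EFin; first exact: nearW.
  by apply: cvgB; [exact: cvg_cst | apply: cvgM; [exact: cvg_cst | exact: slope_cvg]].
rewrite mulr1 (cvg_lim _ gap_a) // lee_fin.
rewrite distC; apply: bowtie_gain; rewrite ?dist_ge0 //.
- by rewrite (distC y m); exact: dist_triangle.
- exact: right_deriv_slope_le.
- exact: right_deriv_cat_slope_le.
- by apply: le_trans ab_le; rewrite le_max lexx.
Qed.

End chord_slopes.
End hadamard_geometry.

Lemma measurable_fun_dist (R : realType) (Q : Type) (d : Q -> Q -> R)
    (dO : measure_display) (Omega : measurableType dO) (Y : Omega -> Q) (p : Q) :
  is_metric d -> (forall U : set Q, d_open d U -> measurable (Y @^-1` U)) ->
  measurable_fun setT (fun w => d (Y w) p).
Proof.
move=> md hY; apply: (measurability _ (RGenOInfty.measurableE R)) => //.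
move=> _ [_ [x ->] <-]; rewrite setTI.
have -> : (fun w => d (Y w) p) @^-1` `]x, +oo[%classic = Y @^-1` [set z | x < d z p].
  by apply/seteqP; split => w /=; rewrite in_itv /= andbT.
apply: hY => z /= xz; exists (d z p - x); split; first by rewrite subr_gt0.
by move=> y zy; have := md.2.2.2 z y p; have := md.2.2.1 z y; lra.
Qed.

Section integral_le_limn.
Local Open Scope ereal_scope.
Context dT (T : measurableType dT) (R : realType).
Variable mu : {measure set T -> \bar R}.

Lemma ge0_le_integralT (f1 f2 : T -> \bar R) :
  (forall x, 0 <= f1 x) -> (forall x, f1 x <= f2 x) ->
  \int[mu]_x f1 x <= \int[mu]_x f2 x.
Proof.
move=> f1_ge0 f12; have f2_ge0 x : 0 <= f2 x := le_trans (f1_ge0 x) (f12 x).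
rewrite !ge0_integralTE //; apply: ereal_sup_le => _ [h h_le <-].
by exists h => //= x; exact: le_trans (h_le x) (f12 x).
Qed.

Lemma integral_le_nd_limn (u : nat -> T -> R) (phi : T -> R) (c : R) (B : \bar R) :
  (0 <= c)%R -> (forall n, measurable_fun setT (u n)) ->
  (forall n x, (0 <= u n x)%R) -> (forall x, nondecreasing_seq (u ^~ x)) ->
  (forall n, \int[mu]_x (u n x)%:E <= B) -> (forall x, (0 <= phi x)%R) ->
  (forall x, (c * phi x)%:E <= limn (fun n => (u n x)%:E)) ->
  c%:E * \int[mu]_x (phi x)%:E <= B.
Proof.
move=> c_ge0 u_meas u_ge0 u_nd u_le phi_ge0 phi_le.
have [->|c_neq0] := eqVneq c 0%R.
  rewrite mul0e; apply: le_trans (u_le 0%N) => //.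
  by apply: integral_ge0 => x _; rewrite lee_fin.
have c_gt0 : (0 < c)%R by rewrite lt_def c_neq0.
have cV_ge0 : (0 <= c^-1)%R by rewrite invr_ge0.
pose v n x := (c^-1 * u n x)%:E.
have vE n : v n = fun x => (c^-1)%:E * (u n x)%:E by apply: funext => x; rewrite /v EFinM.
have v_ge0 n x : 0 <= v n x by rewrite lee_fin mulr_ge0.
have mv n : measurable_fun setT (v n).
  by apply/measurable_EFinP; apply: measurable_funM => //; exact: u_meas.
have v_nd x : {homo v ^~ x : i j / (i <= j)%N >-> i <= j}.
  by move=> i j ij; rewrite lee_fin ler_wpM2l // u_nd.
have mct := @cvg_monotone_convergence _ _ _ mu setT measurableT v mv
  (fun n x _ => v_ge0 n x) (fun x _ => v_nd x).
have phi_le_limv x : (phi x)%:E <= limn (v ^~ x).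
  rewrite (_ : v ^~ x = fun n => (c^-1)%:E * (u n x)%:E); last first.
    by apply: funext => n; rewrite vE.
  rewrite limeMl // ?lee_pdivlMl // -?EFinM; first exact: phi_le.
  by apply: ereal_nondecreasing_is_cvgn => i j ij; rewrite lee_fin u_nd.
have phi_ge0E x : 0 <= (phi x)%:E by rewrite lee_fin.
rewrite -lee_pdivlMl //; apply: le_trans (ge0_le_integralT phi_ge0E phi_le_limv) _.
rewrite -(cvg_lim _ mct) //; apply: lime_le; first exact: cvgP mct.
apply: nearW => n; have u_n_ge0 x : [set: T] x -> 0 <= (u n x)%:E.
  by rewrite lee_fin.
rewrite vE ge0_integralZl_EFin //; last exact/measurable_EFinP.
by apply: lee_pmul => //; exact: integral_ge0.
Qed.

End integral_le_limn.

Section frechet_median.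
Local Open Scope ereal_scope.
Variables (R : realType) (Q : Type) (d : Q -> Q -> R).
Variables (dO : measure_display) (Omega : measurableType dO).
Variables (P : probability Omega R) (Y : Omega -> Q) (o m : Q).
Hypothesis md : is_metric d.
Hypothesis hY : forall U : set Q, d_open d U -> measurable (Y @^-1` U).
Hypothesis median : forall q : Q,
  \int[P]_w (d (Y w) m - d (Y w) o)%:E <= \int[P]_w (d (Y w) q - d (Y w) o)%:E.

Let mdist p : measurable_fun setT (fun w => d (Y w) p) := measurable_fun_dist p md hY.

Lemma integrable_dist_sub p p' :
  P.-integrable setT (EFin \o (fun w => d (Y w) p - d (Y w) p')%R).
Proof.
apply: (@le_integrable _ _ _ P setT _ _ (EFin \o cst (d p p'))) => //.
- exact/measurable_EFinP/measurable_funB.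
- move=> w _; rewrite /= lee_fin (ger0_norm (md.1 p p')) ler_norml.
  have := md.2.2.2 (Y w) p' p; have := md.2.2.2 (Y w) p p'; have := md.2.2.1 p p'.
  by move=> ? ? ?; apply/andP; split; lra.
- exact: finite_measure_integrable_cst.
Qed.

Lemma median_excess_ge0 p : 0 <= \int[P]_w (d (Y w) p - d (Y w) m)%:E.
Proof.
have -> : (fun w => (d (Y w) p - d (Y w) m)%:E) =
    (EFin \o (fun w => d (Y w) p - d (Y w) o)%R) \-
    (EFin \o (fun w => d (Y w) m - d (Y w) o)%R).
  by apply: funext => w; rewrite /= -EFinB; congr (_%:E); lra.
rewrite integralB ?integrable_dist_sub // subre_ge0; first exact: median.
exact/integrable_fin_num/integrable_dist_sub.
Qed.

Variables (q : Q) (g : R -> Q).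

Lemma measurable_gap n : measurable_fun setT (fun w => gap d m q g (Y w) n).
Proof.
under eq_fun => w do rewrite gapE.
apply: measurable_funB; first exact: measurable_funB.
by apply: measurable_funM => //; exact: measurable_funB.
Qed.

Lemma integral_gap_le n : \int[P]_w (gap d m q g (Y w) n)%:E <=
  \int[P]_w (d (Y w) q - d (Y w) m)%:E.
Proof.
set k := (d m q / dyadic_time d m q n)%R.
have k_ge0 : (0 <= k)%R by rewrite divr_ge0 ?divr_ge0 ?md.1.
have -> : (fun w => (gap d m q g (Y w) n)%:E) =
    (EFin \o (fun w => d (Y w) q - d (Y w) m)%R) \- (fun w => k%:E *
    (EFin \o (fun w => d (Y w) (g (dyadic_time d m q n)) - d (Y w) m)%R) w).
  by apply: funext => w; rewrite gapE /= -EFinD.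
rewrite integralB ?integrable_dist_sub //; last first.
  by apply: integrableZl => //; exact: integrable_dist_sub.
rewrite integralZl ?integrable_dist_sub // -[leRHS]sube0 leeB //.
by rewrite mule_ge0 // median_excess_ge0.
Qed.

End frechet_median.

Theorem mainTheorem2 (R : realType) (Q : Type) (d : Q -> Q -> R)
  (dO : measure_display) (Omega : measurableType dO)
  (P : probability Omega R) (Y : Omega -> Q) (o m q : Q) (eta : R) :
  hadamard d ->
  (forall U : set Q, d_open d U -> measurable (Y @^-1` U)) ->
  (forall q' : Q,
     (\int[P]_w (d (Y w) m - d (Y w) o)%:E <=
      \int[P]_w (d (Y w) q' - d (Y w) o)%:E)%E) ->
  q <> m ->
  0 <= eta <= 1 ->
  (\int[P]_w (d (Y w) q - d (Y w) m)%:E >=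
   (2^-1 * eta ^+ 2 * d q m ^+ 2)%:E *
   \int[P]_w ((Num.max (d (Y w) m) (d (Y w) q))^-1 *
              \1_(bowtie_compl d m q eta) (Y w))%:E)%E.
Proof.
move=> hd hY median /nesym hmq _.
have [g hg] := hadamard_unit_geodesic hd m q.
apply: (integral_le_nd_limn (u := fun n w => gap d m q g (Y w) n)).
- by rewrite mulr_ge0 ?sqr_ge0 // mulr_ge0 ?sqr_ge0 ?invr_ge0.
- by move=> n; exact: measurable_gap hd.1 hY _ _ n.
- by move=> n w /=; exact: gap_ge0.
- by move=> w /=; exact: gap_nondecr.
- by move=> n; exact: integral_gap_le hd.1 hY median _ _ n.
- by move=> w; rewrite mulr_ge0 ?invr_ge0 ?le_max ?hd.1.1 // indicE.
- by move=> w /=; exact: bowtie_le_limn_gap.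
Qed.
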